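(* Let $0\leq\beta<\frac{\sqrt{2}-1}{2\sqrt{2}-1}$. There is a constant $C_\beta$, depending only on $\beta$, such that for all distributions $P\neq Q$, all $\delta\in(0,1)$ and all $n\geq C_\beta\log(1/\delta)/\mathrm{H}^2(P,Q)$ the following holds for every distribution $R$, with $X_1,\dots,X_n$ i.i.d. from $R$. If $R$ satisfies any one of $$\mathrm{H}(P,R)\leq\beta\,\mathrm{H}(P,Q),\quad \mathrm{TV}(P,R)\leq\beta^2\mathrm{H}^2(P,Q),\quad \mathrm{KL}(P,R)\leq 2\beta^2\mathrm{H}^2(P,Q),\quad \mathrm{KL}(R,P)\leq 2\beta^2\mathrm{H}^2(P,Q),$$ then \textsc{HellingerTest} outputs $\mathcal{H}_0$ with probability at least $1-\delta$. Symmetrically, if $R$ satisfies any one of the same four conditions with $P$ replaced by $Q$ (and $\mathrm{H}(P,Q)$ unchanged), then \textsc{HellingerTest} outputs $\mathcal{H}_1$ with probability at least $1-\delta$.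
   Context: Distributions $P,Q,R$ are probability distributions on a measurable space $\mathcal{X}$, identified with their densities with respect to a common $\sigma$-finite reference measure $\mu$. All integrals and norms are taken with respect to $\mu$. The Hellinger distance is $\mathrm{H}(P,Q)=\frac{1}{\sqrt{2}}\|\sqrt{P}-\sqrt{Q}\|_2$. The total variation distance is $\mathrm{TV}(P,Q)=\frac12\|P-Q\|_1$. The KL divergence is $\mathrm{KL}(P,R)=\int P\log\frac{P}{R}\,d\mu$ (natural logarithm). For a sample $X^n=(X_1,\dots,X_n)$, the test statistic is $$\mathrm{T}(P,Q,X^n)=\frac{1}{n}\sum_{i=1}^n \frac{P(X_i)-Q(X_i)}{P(X_i)+Q(X_i)},$$ where a summand is interpreted as $0$ whenever $P(X_i)+Q(X_i)=0$. \textsc{HellingerTest} outputs $\mathcal{H}_0$ if $\mathrm{T}(P,Q,X^n)>0$, outputs $\mathcal{H}_1$ if $\mathrm{T}(P,Q,X^n)<0$, and breaks ties uniformly at random. *)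

From HB Require Import structures.
From mathcomp Require Import all_boot all_order all_algebra.
From mathcomp Require Import all_classical all_reals all_analysis.
Set Implicit Arguments. Unset Strict Implicit. Unset Printing Implicit Defensive.
Import Order.TTheory GRing.Theory Num.Theory.
Import numFieldNormedType.Exports.
Local Open Scope classical_set_scope.
Local Open Scope ring_scope.

Section defs.
Context {R : realType} {d : measure_display} {T : measurableType d}.
Variable mu : {measure set T -> \bar R}.

Definition is_density (p : T -> R) : Prop :=
  [/\ measurable_fun setT p, (forall x, 0 <= p x) &
      (\int[mu]_x (p x)%:E = 1)%E].

Definition distr_neq (p q : T -> R) : Prop :=
  exists A, measurable A /\
    (\int[mu]_(x in A) (p x)%:E <> \int[mu]_(x in A) (q x)%:E)%E.

Definition hellinger (p q : T -> R) : R :=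
  (Num.sqrt 2)^-1 *
  Num.sqrt (fine (\int[mu]_x ((Num.sqrt (p x) - Num.sqrt (q x)) ^+ 2)%:E)).

Definition tv (p q : T -> R) : R :=
  2^-1 * fine (\int[mu]_x (`|p x - q x|)%:E).

Definition kl_integrand (p r : T -> R) (x : T) : \bar R :=
  if p x == 0 then 0%E
  else if r x == 0 then +oo%E
  else (p x * ln (p x / r x))%:E.

Definition kl (p r : T -> R) : \bar R := (\int[mu]_x kl_integrand p r x)%E.

(* Expectation of g(X_1,...,X_n) for X_i i.i.d. with density r
   (iterated integral over the product measure; g nonnegative) *)
Fixpoint iid_expect (r : T -> R) (n : nat) (g : seq T -> \bar R) : \bar R :=
  match n with
  | 0 => g [::]
  | n'.+1 => (\int[mu]_x ((r x)%:E * iid_expect r n' (fun s => g (x :: s))))%E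
  end.
End defs.

Section test.
Context {R : realType} {T : Type}.

Definition test_summand (p q : T -> R) (x : T) : R :=
  if p x + q x == 0 then 0 else (p x - q x) / (p x + q x).

Definition test_stat (p q : T -> R) (xs : seq T) : R :=
  (size xs)%:R^-1 * \sum_(x <- xs) test_summand p q x.

(* probability (over the uniform tie-breaking coin) that HellingerTest
   outputs H0, resp. H1, on the sample xs *)
Definition out_H0 (p q : T -> R) (xs : seq T) : R :=
  if 0 < test_stat p q xs then 1
  else if test_stat p q xs == 0 then 2^-1 else 0.

Definition out_H1 (p q : T -> R) (xs : seq T) : R :=
  if test_stat p q xs < 0 then 1
  else if test_stat p q xs == 0 then 2^-1 else 0.
End test.

Definition close_to {R : realType} {d} {T : measurableType d}
  (mu : {measure set T -> \bar R}) (beta h : R) (p r : T -> R) : Prop :=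
  [\/ hellinger mu p r <= beta * h,
      tv mu p r <= beta ^+ 2 * h ^+ 2,
      (kl mu p r <= (2 * beta ^+ 2 * h ^+ 2)%:E)%E |
      (kl mu r p <= (2 * beta ^+ 2 * h ^+ 2)%:E)%E].

From HB Require Import structures.
From mathcomp Require Import all_boot all_order all_algebra.
From mathcomp Require Import all_classical all_reals all_analysis.
From mathcomp Require Import ring lra.
Import measurable_realfun.
Import Order.TTheory GRing.Theory Num.Theory.
Import numFieldNormedType.Exports.
Local Open Scope classical_set_scope.
Local Open Scope ring_scope.

(* Write f = (P - Q) / (P + Q) for the summand of the test statistic
   (|f| <= 1) and I(U, V) = \int (sqrt U - sqrt V)^2 = 2 H^2(U, V).
   1. Two pointwise inequalities in a = sqrt P, b = sqrt Q, c = sqrt R,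
      integrated against R, bound the first two moments of f under R:
        E_R f >= I(P,Q)/8 - 2 I(P,R),     E_R f^2 <= 2 I(P,R) + 4 I(P,Q).
   2. Each of the four closeness conditions implies I(P,R) <= beta^2 I(P,Q),
      because 2 H^2 <= 2 TV and 2 H^2 <= KL (in both directions).
   3. A Chernoff bound, proved by induction on n directly on the iterated
      integral iid_expect, shows that the test errs with probability at most
      M^n, where M = E_R exp(-lam f) <= exp(-lam E f + 2 lam^2 E f^2) for
      0 <= lam <= 1/2.
   4. beta < (sqrt 2 - 1)/(2 sqrt 2 - 1) implies beta < 1/4, so
      gam = 1/8 - 2 beta^2 > 0; with lam = gam/20 the bound M^n is at most
      exp(- n gam^2 I(P,Q) / 40) <= delta as soon as
      n >= (20 / gam^2) ln(1/delta) / H^2(P,Q).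
   The H1 case is the H0 case with P and Q exchanged. *)

(* Pointwise algebra.  g = (a^2 - b^2)/(a^2 + b^2) is the test summand
   written in terms of the square roots a, b of the two densities. *)
Section ratio_inequalities.
Context {R : realFieldType}.
Implicit Types a b c : R.

Lemma ratio_norm_le1 a b : `|(a^+2 - b^+2) / (a^+2 + b^+2)| <= 1.
Proof.
have [s0|sn0] := eqVneq (a^+2 + b^+2) 0; first by rewrite s0 invr0 mulr0 normr0.
have sp : 0 < a^+2 + b^+2 by rewrite lt_neqAle eq_sym sn0 addr_ge0 // sqr_ge0.
rewrite normrM normfV (gtr0_norm sp) ler_pdivrMr // mul1r.
by rewrite ler_norml; apply/andP; split; nra.
Qed.

Lemma sqr_diff_le_ratio a b : 0 <= a -> 0 <= b ->
  (a - b)^+2 * (a^+2 + b^+2) <= (a^+2 - b^+2)^+2.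
Proof.
move=> a0 b0; have -> : (a^+2 - b^+2)^+2 = (a - b)^+2 * (a + b)^+2 by ring.
by apply: ler_wpM2l; [exact: sqr_ge0 | nra].
Qed.

(* Pointwise form of the lower bound on the mean of the statistic. *)
Lemma ratio_lower_bound a b c : 0 <= a -> 0 <= b -> 0 <= c ->
  (a - b)^+2 / 8 - 2 * (c - a)^+2 + (a^+2 - b^+2) / 2 <=
  c^+2 * ((a^+2 - b^+2) / (a^+2 + b^+2)).
Proof.
move=> a0 b0 c0; set s := a^+2 + b^+2.
have [s0|sn0] := eqVneq s 0.
  have [-> ->] : a = 0 /\ b = 0 by move: s0; rewrite /s; split; nra.
  by rewrite s0 invr0 !mulr0; nra.
have sp : 0 < s by rewrite lt_neqAle eq_sym sn0 addr_ge0 // sqr_ge0.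
set g := (a^+2 - b^+2) / s.
have gs : g * s = a^+2 - b^+2 by rewrite /g divfK.
have /andP[g1 g2] : -1 <= g <= 1 by rewrite -ler_norml; exact: ratio_norm_le1.
(* the inequality is a perfect square once multiplied by g + 2 > 0 *)
have sq : (g + 2) * (c^+2 * g + 2 * (c - a)^+2) - 2 * a^+2 * g =
          ((g + 2) * c - 2 * a)^+2 by ring.
have h1 : 2 * a^+2 * g <= (g + 2) * (c^+2 * g + 2 * (c - a)^+2).
  by rewrite -subr_ge0 sq sqr_ge0.
have h2 : (a - b)^+2 <= g^+2 * s.
  have : (a - b)^+2 * s <= (g * s)^+2 by rewrite gs; exact: sqr_diff_le_ratio.
  by rewrite exprMn [s^+2]expr2 mulrA ler_pM2r.
have ha : 2 * a^+2 = s + g * s by rewrite gs /s; ring.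
nra.
Qed.

(* Pointwise form of the upper bound on the second moment. *)
Lemma ratio_sq_upper_bound a b c : 0 <= a -> 0 <= b -> 0 <= c ->
  c^+2 * ((a^+2 - b^+2) / (a^+2 + b^+2))^+2 <= 2 * (c - a)^+2 + 4 * (a - b)^+2.
Proof.
move=> a0 b0 c0; set s := a^+2 + b^+2.
have [s0|sn0] := eqVneq s 0.
  by rewrite s0 invr0 mulr0 expr0n mulr0 addr_ge0 // mulr_ge0 // sqr_ge0.
have sp : 0 < s by rewrite lt_neqAle eq_sym sn0 addr_ge0 // sqr_ge0.
set g := (a^+2 - b^+2) / s.
have gs : g * s = a^+2 - b^+2 by rewrite /g divfK.
have g2 : g^+2 <= 1.
  by have := ratio_norm_le1 a b; rewrite -/s -/g ler_norml => /andP[? ?]; nra.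
(* a^2 g^2 <= 2 (a - b)^2, since a^2 (a + b)^2 <= 2 s^2 *)
have hag : a^+2 * g^+2 <= 2 * (a - b)^+2.
  rewrite -(ler_pM2r (exprn_gt0 2 sp)) -mulrA -exprMn gs.
  have -> : a^+2 * (a^+2 - b^+2)^+2 = (a - b)^+2 * (a^+2 * (a + b)^+2) by ring.
  have -> : 2 * (a - b)^+2 * s^+2 = (a - b)^+2 * (2 * s^+2) by ring.
  by rewrite ler_wpM2l ?sqr_ge0 // /s; nra.
have hc : c^+2 <= 2 * (c - a)^+2 + 2 * a^+2.
  have -> : 2 * (c - a)^+2 + 2 * a^+2 = c^+2 + (c - 2 * a)^+2 by ring.
  by rewrite lerDl sqr_ge0.
have h1 : c^+2 * g^+2 <= (2 * (c - a)^+2 + 2 * a^+2) * g^+2.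
  by rewrite ler_wpM2r // sqr_ge0.
have h2 : (c - a)^+2 * g^+2 <= (c - a)^+2 by rewrite ler_piMr // sqr_ge0.
clearbody s g; nra.
Qed.

End ratio_inequalities.

Lemma expR_le_quadratic (R : realType) (x : R) :
  x <= 2^-1 -> expR x <= 1 + x + 2 * x^+2.
Proof.
move=> x2; have h1 : 1 - x <= expR (- x) by exact: expR_ge1Dx.
have h1p : 0 < 1 - x by lra.
rewrite -[x]opprK expRN opprK.
apply: (@le_trans _ _ (1 - x)^-1); first by rewrite lef_pV2 ?posrE ?expR_gt0.
rewrite -[X in X <= _]div1r ler_pdivrMr //.
have -> : (1 + x + 2 * x^+2) * (1 - x) = 1 + x^+2 * (1 - 2 * x) by ring.
by rewrite lerDl mulr_ge0 ?sqr_ge0 //; lra.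
Qed.

(* Pointwise lower bound on the KL integrand: p ln (p/r) >= (sqrt p - sqrt r)^2
   + p - r, which integrates to KL(P, R) >= I(P, R). *)
Lemma kl_integrand_ge (R : realType) (d : measure_display) (T : measurableType d)
  (p r : T -> R) (x : T) : 0 <= p x -> 0 <= r x ->
  (((Num.sqrt (p x) - Num.sqrt (r x))^+2 + p x - r x)%:E <= kl_integrand p r x)%E.
Proof.
rewrite /kl_integrand; move: (p x) (r x) => u v u0 v0.
have [->|un0] := eqVneq u 0.
  by rewrite sqrtr0 sub0r sqrrN sqr_sqrtr // addr0 subrr.
have [->|vn0] := eqVneq v 0; first exact: leey.
have sqrt_pos (w : R) : 0 <= w -> w != 0 -> exists2 a : R, 0 < a & w = a^+2.
  move=> w0 wn0; exists (Num.sqrt w); last by rewrite sqr_sqrtr.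
  by rewrite sqrtr_gt0 lt_neqAle eq_sym wn0.
have [a ap ->] := sqrt_pos u u0 un0; have [c cp ->] := sqrt_pos v v0 vn0.
rewrite lee_fin !sqrtr_sqr !gtr0_norm //.
(* with y = c / a: ln (a^2 / c^2) = - 2 ln y and ln y <= y - 1 *)
set y := c / a; have yp : 0 < y by rewrite divr_gt0.
have lny : ln y <= y - 1.
  have e : 1 + (y - 1) = y by ring.
  by have := @le_ln1Dx R (y - 1); rewrite e; apply; lra.
have -> : ln (a^+2 / c^+2) = - (ln y *+ 2).
  by rewrite -invf_div -expr_div_n lnV ?posrE ?exprn_gt0 // lnXn.
have ac : a * c = a^+2 * y by rewrite /y; field; rewrite gt_eqF.
have := ler_wpM2l (sqr_ge0 a) lny.
have -> : (a - c)^+2 + a^+2 - c^+2 = 2 * a^+2 - 2 * (a * c) by ring.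
rewrite ac -mulr_natr; clearbody y; lra.
Qed.

(* beta < (sqrt 2 - 1)/(2 sqrt 2 - 1) ~ 0.227 implies beta < 1/4, which is
   all the argument uses. *)
Lemma beta_lt_quarter (R : realType) (beta : R) :
  beta < (Num.sqrt 2 - 1) / (2 * Num.sqrt 2 - 1) -> beta < 4^-1.
Proof.
move=> hb; apply: (lt_le_trans hb).
have s2 : Num.sqrt 2 ^+ 2 = 2 :> R by rewrite sqr_sqrtr.
have s0 : 0 <= Num.sqrt 2 :> R by exact: sqrtr_ge0.
move: s2 s0; move: (Num.sqrt 2) => s s2 s0.
have s1 : 1 < s by nra.
by rewrite ler_pdivrMr; nra.
Qed.

(* Monotonicity of the integral over the whole space, for arbitrary (not
   necessarily measurable) functions: it follows from the definition of the
   integral as a supremum over simple functions.  Needed because neither the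
   KL integrand nor the iterated integrals iid_expect are known measurable. *)
Section integral_monotonicity.
Context {R : realType} {d : measure_display} {T : measurableType d}.
Variable mu : {measure set T -> \bar R}.

Lemma ge0_le_integral_any (f g : T -> \bar R) : (forall x, (0 <= f x)%E) ->
  (forall x, (f x <= g x)%E) -> (\int[mu]_x f x <= \int[mu]_x g x)%E.
Proof.
move=> f0 fg; have g0 x : (0 <= g x)%E by exact: le_trans (f0 x) (fg x).
rewrite !ge0_integralTE //.
apply: ge_ereal_sup => _ [h hf <-]; apply: ereal_sup_ubound; exists h => //.
by move=> x; exact: le_trans (hf x) (fg x).
Qed.

Lemma le_integral_any (f g : T -> \bar R) :
  (forall x, (f x <= g x)%E) -> (\int[mu]_x f x <= \int[mu]_x g x)%E.
Proof.
move=> fg; rewrite (integralE _ _ f) (integralE _ _ g); apply: leeB.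
  apply: ge0_le_integral_any => x; first exact: funepos_ge0.
  by apply: (@funepos_le _ _ setT); rewrite ?inE // => y _; exact: fg.
apply: ge0_le_integral_any => x; first exact: funeneg_ge0.
by apply: (@funeneg_le _ _ setT); rewrite ?inE // => y _; exact: fg.
Qed.

End integral_monotonicity.

Section densities.
Context {R : realType} {d : measure_display} {T : measurableType d}.
Context {mu : {measure set T -> \bar R}}.
Local Notation integrable f := (mu.-integrable setT (EFin \o f)).
Implicit Types g h p : T -> R.

Lemma integral_EFin {g} : integrable g ->
  (\int[mu]_x (g x)%:E = (\int[mu]_x g x)%:E)%E.
Proof. by move=> ig; rewrite /Rintegral fineK // integrable_fin_num. Qed.

Lemma integrable_dominated {g} h : measurable_fun setT g -> integrable h ->
  (forall x, `|g x| <= h x) -> integrable g.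
Proof.
move=> mg ih gh; apply: le_integrable ih => //; first exact/measurable_EFinP.
by move=> x _ /=; rewrite lee_fin (le_trans (gh x)) // ler_norm.
Qed.

Lemma integrableD_EFin {g h} : integrable g -> integrable h ->
  integrable (fun x => g x + h x).
Proof. by move=> ig ih; apply: eq_integrable (integrableD _ ig ih). Qed.

Lemma integrableB_EFin {g h} : integrable g -> integrable h ->
  integrable (fun x => g x - h x).
Proof. by move=> ig ih; apply: eq_integrable (integrableB _ ig ih). Qed.

Lemma integrableZl_EFin (k : R) {g} : integrable g -> integrable (fun x => k * g x).
Proof. by move=> ig; apply: eq_integrable (integrableZl _ k ig). Qed.

Lemma density_measurable {p} : is_density mu p -> measurable_fun setT p.
Proof. by case. Qed.

Lemma density_ge0 {p} : is_density mu p -> forall x, 0 <= p x.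
Proof. by case. Qed.

Lemma density_integrable {p} : is_density mu p -> integrable p.
Proof.
case=> mp p0 p1; apply/integrableP; split; first exact/measurable_EFinP.
by under eq_integral do rewrite /= ger0_norm ?p0 //; rewrite p1 ltry.
Qed.

Lemma density_Rintegral {p} : is_density mu p -> \int[mu]_x p x = 1.
Proof. by case=> _ _ p1; rewrite /Rintegral p1. Qed.

Lemma measurable_sqrt g : measurable_fun setT g ->
  measurable_fun setT (fun x => Num.sqrt (g x)).
Proof.
move=> mg; apply: (measurableT_comp (f := @Num.sqrt R)) => //.
by apply: continuous_measurable_fun; exact: sqrt_continuous.
Qed.

(* x^-1 = x `^ (-1) for x >= 0, and powR is measurable. *)
Lemma measurable_inv g : measurable_fun setT g -> (forall x, 0 <= g x) ->
  measurable_fun setT (fun x => (g x)^-1).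
Proof.
move=> mg g0; rewrite (_ : (fun x => _) = fun x => g x `^ (-1)).
  exact: measurableT_comp (measurable_powR _) mg.
by apply: funext => x; rewrite powR_inv1.
Qed.

End densities.

(* I(u, v) = \int (sqrt u - sqrt v)^2 = 2 H^2(u, v), and the three lower
   bounds (TV, KL in either direction) that reduce every closeness
   condition to a bound on I. *)
Section hellinger_integral.
Context {R : realType} {d : measure_display} {T : measurableType d}.
Variable mu : {measure set T -> \bar R}.
Local Notation integrable f := (mu.-integrable setT (EFin \o f)).
Implicit Types p q r u v : T -> R.

Definition hell_int u v : R := \int[mu]_x (Num.sqrt (u x) - Num.sqrt (v x))^+2.

Lemma hell_int_ge0 u v : 0 <= hell_int u v.
Proof. by apply: Rintegral_ge0 => x _; exact: sqr_ge0. Qed.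

Lemma hell_int_sym u v : hell_int u v = hell_int v u.
Proof. by apply: eq_Rintegral => x _; rewrite -sqrrN opprB. Qed.

Lemma hellinger_sqr u v : hellinger mu u v ^+ 2 = hell_int u v / 2.
Proof.
rewrite /hellinger exprMn exprVn !sqr_sqrtr //; last exact: hell_int_ge0.
by rewrite mulrC.
Qed.

Lemma hellinger_ge0 u v : 0 <= hellinger mu u v.
Proof. by rewrite mulr_ge0 // invr_ge0 sqrtr_ge0. Qed.

Lemma hellinger_sym u v : hellinger mu u v = hellinger mu v u.
Proof. by rewrite /hellinger; congr (_ * Num.sqrt _); exact: hell_int_sym. Qed.

(* (sqrt u - sqrt v)^2 <= 2 (u + v) makes the Hellinger integrand integrable. *)
Lemma integrable_sqrt_gap {u v} : is_density mu u -> is_density mu v ->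
  integrable (fun x => (Num.sqrt (u x) - Num.sqrt (v x))^+2).
Proof.
move=> du dv; apply: (integrable_dominated (fun x => 2 * (u x + v x))).
- apply: measurable_funX; apply: measurable_funB; apply: measurable_sqrt.
    exact: density_measurable du.
  exact: density_measurable dv.
- by apply: integrableZl_EFin; apply: integrableD_EFin; exact: density_integrable.
move=> x; rewrite ger0_norm ?sqr_ge0 //.
have := sqr_sqrtr (density_ge0 du x); have := sqr_sqrtr (density_ge0 dv x).
have := sqrtr_ge0 (u x); have := sqrtr_ge0 (v x); nra.
Qed.

Lemma hell_int_shift {u v} : is_density mu u -> is_density mu v ->
  \int[mu]_x ((Num.sqrt (u x) - Num.sqrt (v x))^+2 + u x - v x) = hell_int u v.
Proof.
move=> du dv; have iA := integrable_sqrt_gap du dv.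
have iu := density_integrable du; have iv := density_integrable dv.
rewrite RintegralB //; last exact: integrableD_EFin.
by rewrite RintegralD // (density_Rintegral du) (density_Rintegral dv) addrK.
Qed.

Lemma kl_ge_hell_int {u v} : is_density mu u -> is_density mu v ->
  ((hell_int u v)%:E <= kl mu u v)%E.
Proof.
move=> du dv; rewrite -(hell_int_shift du dv) -integral_EFin; last first.
  apply/integrableB_EFin/(density_integrable dv).
  by apply/integrableD_EFin/(density_integrable du); exact: integrable_sqrt_gap.
apply: le_integral_any => x.
exact: kl_integrand_ge (density_ge0 du x) (density_ge0 dv x).
Qed.

(* |u - v| = |sqrt u - sqrt v| (sqrt u + sqrt v) >= (sqrt u - sqrt v)^2 *)
Lemma tv_ge_hell_int {u v} : is_density mu u -> is_density mu v ->
  hell_int u v / 2 <= tv mu u v.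
Proof.
move=> du dv; have iu := density_integrable du; have iv := density_integrable dv.
have mB : measurable_fun setT (fun x => `|u x - v x|).
  apply: (measurableT_comp (f := @Num.norm R R)) => //.
  by apply: measurable_funB; [exact: density_measurable du|exact: density_measurable dv].
have iB : integrable (fun x => `|u x - v x|).
  apply: (integrable_dominated _ mB (integrableD_EFin iu iv)) => x.
  have := density_ge0 du x; have := density_ge0 dv x.
  by rewrite normr_id ler_norml => ? ?; apply/andP; split; lra.
rewrite /tv mulrC ler_pM2l ?invr_gt0 //.
apply: le_Rintegral => //; first exact: integrable_sqrt_gap.
move=> x _; rewrite -{2}(sqr_sqrtr (density_ge0 du x)) -{2}(sqr_sqrtr (density_ge0 dv x)).
have := sqrtr_ge0 (u x); have := sqrtr_ge0 (v x).
move: (Num.sqrt (u x)) (Num.sqrt (v x)) => a c c0 a0.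
have -> : a^+2 - c^+2 = (a - c) * (a + c) by ring.
rewrite normrM (ger0_norm (addr_ge0 a0 c0)).
have -> : (a - c)^+2 = `|a - c| * `|a - c| by rewrite -normrM -expr2 ger0_norm ?sqr_ge0.
by rewrite ler_wpM2l // ler_norml; apply/andP; split; lra.
Qed.

Lemma close_hell_int (beta : R) p q r : 0 <= beta ->
  is_density mu p -> is_density mu r ->
  close_to mu beta (hellinger mu p q) p r -> hell_int p r <= beta^+2 * hell_int p q.
Proof.
move=> b0 dp dr cl; have := hellinger_sqr p q.
have h0 := hellinger_ge0 p q; move: (hellinger mu p q) h0 cl => h h0 [H|H|H|H] hI.
- have : hellinger mu p r ^+ 2 <= (beta * h)^+2.
    by rewrite ler_sqr ?nnegrE ?mulr_ge0 ?hellinger_ge0.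
  by rewrite hellinger_sqr exprMn; nra.
- by have := tv_ge_hell_int dp dr; nra.
- by have := le_trans (kl_ge_hell_int dp dr) H; rewrite lee_fin; nra.
- by have := le_trans (kl_ge_hell_int dr dp) H; rewrite lee_fin hell_int_sym; nra.
Qed.

(* Distinct distributions are at positive Hellinger distance: if I(p, q) = 0
   then sqrt p = sqrt q almost everywhere, so p and q have the same integral
   over every measurable set. *)
Lemma hell_int_gt0 {p q} : is_density mu p -> is_density mu q ->
  distr_neq mu p q -> 0 < hell_int p q.
Proof.
move=> dp dq [B [mB neqB]]; rewrite lt_neqAle hell_int_ge0 andbT eq_sym.
apply/negP => /eqP I0; apply: neqB.
have mp := density_measurable dp; have mq := density_measurable dq.
set g := fun x => (Num.sqrt (p x) - Num.sqrt (q x))^+2.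
have mg : measurable_fun setT (EFin \o g).
  by apply/measurable_EFinP/measurable_funX/measurable_funB; exact: measurable_sqrt.
have g0 : (\int[mu]_x `|(EFin \o g) x| = 0%:E)%E.
  under eq_integral do rewrite gee0_abs ?lee_fin ?sqr_ge0 //.
  rewrite integral_EFin; last by rewrite /g; exact: integrable_sqrt_gap dp dq.
  by rewrite -I0.
have /(ae_eq_integral_abs mu measurableT mg).1 g_ae := g0.
apply: ae_eq_integral => //; try by apply: (measurable_funS measurableT);
  rewrite //; apply/measurable_EFinP.
apply: filterS g_ae => x /(_ I) /= /eqP; rewrite eqe sqrf_eq0 subr_eq0 => /eqP e _.
by rewrite -(sqr_sqrtr (density_ge0 dp x)) -(sqr_sqrtr (density_ge0 dq x)) e.
Qed.

End hellinger_integral.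

Section test_statistic.
Context {R : realType} {T : Type}.
Implicit Types (p q : T -> R) (x : T) (xs : seq T).

Lemma test_summandE p q x : test_summand p q x = (p x - q x) / (p x + q x).
Proof. by rewrite /test_summand; case: eqP => // ->; rewrite invr0 mulr0. Qed.

Lemma test_summand_sqrt p q x : 0 <= p x -> 0 <= q x ->
  test_summand p q x = (Num.sqrt (p x) ^+ 2 - Num.sqrt (q x) ^+ 2) /
                       (Num.sqrt (p x) ^+ 2 + Num.sqrt (q x) ^+ 2).
Proof. by move=> p0 q0; rewrite test_summandE !sqr_sqrtr. Qed.

Lemma test_summand_bounded p q x : 0 <= p x -> 0 <= q x ->
  -1 <= test_summand p q x <= 1.
Proof. by move=> p0 q0; rewrite -ler_norml test_summand_sqrt // ratio_norm_le1. Qed.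

Lemma test_summand_swap p q x : test_summand q p x = - test_summand p q x.
Proof. by rewrite !test_summandE -mulNr opprB (addrC (p x)). Qed.

(* Probability that HellingerTest outputs H0 when the sum of the summands
   is t: the sign of the statistic is the sign of t. *)
Definition accept_H0 (t : R) : R := if 0 < t then 1 else if t == 0 then 2^-1 else 0.

Lemma accept_H0_ge0 t : 0 <= accept_H0 t.
Proof. by rewrite /accept_H0; case: ifP => // _; case: ifP. Qed.

Lemma out_H0_sum p q xs :
  out_H0 p q xs = accept_H0 (\sum_(x <- xs) test_summand p q x).
Proof.
rewrite /out_H0 /test_stat /accept_H0; case: xs => [|x s]; first by rewrite big_nil mulr0.
have k0 : 0 < (size (x :: s))%:R^-1 :> R by rewrite invr_gt0 ltr0n.
by rewrite pmulr_rgt0 // mulf_eq0 (gt_eqF k0).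
Qed.

Lemma out_H1_swap p q xs : out_H1 p q xs = out_H0 q p xs.
Proof.
have e : test_stat q p xs = - test_stat p q xs.
  rewrite /test_stat -mulrN -sumrN; congr (_ * _).
  by apply: eq_bigr => x _; rewrite test_summand_swap.
by rewrite /out_H1 /out_H0 e oppr_gt0 oppr_eq0.
Qed.

End test_statistic.

Lemma iid_expect_ge0 {R : realType} {d : measure_display} {T : measurableType d}
  (mu : {measure set T -> \bar R}) (r : T -> R) n (g : seq T -> \bar R) :
  (forall x, 0 <= r x) -> (forall xs, (0 <= g xs)%E) -> (0 <= iid_expect mu r n g)%E.
Proof.
move=> r0; elim: n g => [|n IH] g g0 //=.
apply: integral_ge0 => x _; apply: mule_ge0; first by rewrite lee_fin.
by apply: IH => xs; exact: g0.
Qed.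

Section chernoff.
Context {R : realType} {d : measure_display} {T : measurableType d}.
Variable mu : {measure set T -> \bar R}.
Local Notation integrable f := (mu.-integrable setT (EFin \o f)).
Variables (r f : T -> R).
Hypotheses (dr : is_density mu r) (mf : measurable_fun setT f)
  (f_bounded : forall x, -1 <= f x <= 1).

Lemma integrable_weighted (g : R -> R) (K : R) : measurable_fun setT g ->
  (forall y, -1 <= y <= 1 -> `|g y| <= K) -> integrable (fun x => r x * g (f x)).
Proof.
move=> mg gK; apply: (integrable_dominated (fun x => K * r x)).
- apply: measurable_funM; first exact: density_measurable dr.
  exact: measurableT_comp mg mf.
- exact/integrableZl_EFin/density_integrable.
move=> x; rewrite normrM (ger0_norm (density_ge0 dr x)) mulrC.
by rewrite ler_wpM2r ?(density_ge0 dr) ?gK.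
Qed.

Definition mgf (lam : R) : R := \int[mu]_x (r x * expR (- (lam * f x))).

Lemma integrable_mgf {lam} : 0 <= lam ->
  integrable (fun x => r x * expR (- (lam * f x))).
Proof.
move=> l0; apply: (integrable_weighted (fun y => expR (- (lam * y))) (expR lam)).
  by apply: measurableT_comp => //; apply: measurable_funN; apply: measurable_funM.
move=> y /andP[y1 y2]; rewrite ger0_norm ?expR_ge0 // ler_expR; nra.
Qed.

Lemma mgf_le_quadratic lam : 0 <= lam -> lam <= 2^-1 ->
  mgf lam <= 1 - lam * \int[mu]_x (r x * f x)
                 + 2 * lam^+2 * \int[mu]_x (r x * f x ^+ 2).
Proof.
move=> l0 l2.
have i1 := density_integrable dr.
have i2 : integrable (fun x => r x * f x).
  by apply: (integrable_weighted id 1) => // y; rewrite ler_norml.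
have i3 : integrable (fun x => r x * f x ^+ 2).
  apply: (integrable_weighted (fun y => y ^+ 2) 1).
    exact: measurable_funX.
  by move=> y /andP[y1 y2]; rewrite ger0_norm ?sqr_ge0 //; nra.
have i12 := integrableB_EFin i1 (integrableZl_EFin lam i2).
have i4 := integrableZl_EFin (2 * lam^+2) i3.
have -> : 1 - lam * \int[mu]_x (r x * f x) + 2 * lam^+2 * \int[mu]_x (r x * f x ^+ 2)
  = \int[mu]_x (r x - lam * (r x * f x) + 2 * lam^+2 * (r x * f x ^+ 2)).
  have i5 := integrableZl_EFin lam i2.
  by rewrite RintegralD // RintegralB // !RintegralZl // (density_Rintegral dr).
apply: le_Rintegral => //; [exact: integrable_mgf | exact: integrableD_EFin |].
move=> x _; have /andP[f1 f2] := f_bounded x.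
have := @expR_le_quadratic R (- (lam * f x)) ltac:(nra).
have -> : r x - lam * (r x * f x) + 2 * lam^+2 * (r x * f x ^+ 2) =
  r x * (1 + - (lam * f x) + 2 * (- (lam * f x))^+2) by ring.
by move=> h; rewrite ler_wpM2l // (density_ge0 dr).
Qed.

Definition accept_prob (n : nat) (t : R) : \bar R :=
  iid_expect mu r n (fun xs => (accept_H0 (t + \sum_(x <- xs) f x))%:E).

Lemma accept_prob_ge0 n t : (0 <= accept_prob n t)%E.
Proof.
apply: iid_expect_ge0; first exact: density_ge0 dr.
by move=> xs; rewrite lee_fin accept_H0_ge0.
Qed.

Lemma accept_prob_S n t :
  accept_prob n.+1 t = (\int[mu]_x ((r x)%:E * accept_prob n (t + f x)))%E.
Proof.
apply: eq_integral => x _; congr (_ * _)%E; congr (iid_expect _ _ _ _).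
by apply: funext => s; rewrite big_cons addrA.
Qed.

(* Chernoff: H0 is rejected with probability at most exp(-lam t) M^n where
   M = mgf lam; by induction on n, since integrating out one sample
   multiplies the bound by M. *)
Lemma chernoff n t lam : 0 <= lam ->
  ((1 - expR (- (lam * t)) * mgf lam ^+ n)%:E <= accept_prob n t)%E.
Proof.
move=> l0; have r0 := density_ge0 dr.
elim: n t => [|n IH] t.
  rewrite /accept_prob /= big_nil addr0 expr0 mulr1 lee_fin /accept_H0.
  case: ifP => t0; first by rewrite lerBlDr lerDl expR_ge0.
  have : 1 <= expR (- (lam * t)).
    apply: le_trans (expR_ge1Dx _); rewrite lerDl oppr_ge0.
    by rewrite mulr_ge0_le0 // leNgt t0.
  by rewrite -subr_le0 => /le_trans; apply; case: ifP.
set k := expR (- (lam * t)) * mgf lam ^+ n.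
have ik := integrableZl_EFin k (integrable_mgf l0).
have -> : 1 - expR (- (lam * t)) * mgf lam ^+ n.+1 =
    \int[mu]_x (r x - k * (r x * expR (- (lam * f x)))).
  rewrite RintegralB //; last exact: density_integrable dr.
  by rewrite RintegralZl ?(integrable_mgf l0) // (density_Rintegral dr) /k exprSr mulrA.
rewrite -integral_EFin; last exact: integrableB_EFin (density_integrable dr) ik.
rewrite accept_prob_S.
(* pointwise, the integrand is r x times the bound at t + f x, clipped at 0 *)
apply: (@le_trans _ _ (\int[mu]_x ((r x * Order.max 0
   (1 - expR (- (lam * (t + f x))) * mgf lam ^+ n))%:E))%E).
  apply: le_integral_any => x; rewrite lee_fin.
  have -> : r x - k * (r x * expR (- (lam * f x))) =
      r x * (1 - expR (- (lam * (t + f x))) * mgf lam ^+ n).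
    by rewrite (mulrDr lam) opprD expRD /k; ring.
  by rewrite ler_wpM2l // le_max lexx orbT.
apply: ge0_le_integral_any => x; first by rewrite lee_fin mulr_ge0 // le_max lexx.
rewrite EFinM; apply: lee_wpmul2l; first by rewrite lee_fin.
by case: (leP (1 - expR (- (lam * (t + f x))) * mgf lam ^+ n) 0) => _;
  [exact: accept_prob_ge0 | exact: IH].
Qed.

End chernoff.
Arguments integrable_weighted {R d T mu r f}.
Arguments mgf_le_quadratic {R d T mu r f}.
Arguments chernoff {R d T mu r f}.

Section test_moments.
Context {R : realType} {d : measure_display} {T : measurableType d}.
Variable mu : {measure set T -> \bar R}.
Local Notation hell_int := (hell_int mu).
Variables (p q r : T -> R).
Hypotheses (dp : is_density mu p) (dq : is_density mu q) (dr : is_density mu r).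

Lemma measurable_test_summand : measurable_fun setT (test_summand p q).
Proof.
have mp := density_measurable dp; have mq := density_measurable dq.
rewrite (_ : test_summand p q = fun x => (p x - q x) * (p x + q x)^-1); last first.
  by apply: funext => x; rewrite test_summandE.
apply: measurable_funM; first exact: measurable_funB.
apply: measurable_inv; first exact: measurable_funD.
by move=> x; rewrite addr_ge0 ?(density_ge0 dp) ?(density_ge0 dq).
Qed.

Lemma test_summand_bounded_dens x : -1 <= test_summand p q x <= 1.
Proof. exact: test_summand_bounded (density_ge0 dp x) (density_ge0 dq x). Qed.

(* E_R f >= I(P, Q)/8 - 2 I(P, R): integrate ratio_lower_bound; the extra
   term (P - Q)/2 integrates to 0. *)
Lemma mean_lower_bound :
  hell_int p q / 8 - 2 * hell_int p r <= \int[mu]_x (r x * test_summand p q x).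
Proof.
have iA := integrable_sqrt_gap mu dp dq; have iB := integrable_sqrt_gap mu dr dp.
have ip := density_integrable dp; have iq := density_integrable dq.
have i1 := integrableZl_EFin 8^-1 iA; have i2 := integrableZl_EFin 2 iB.
have i3 := integrableZl_EFin 2^-1 (integrableB_EFin ip iq).
have -> : hell_int p q / 8 - 2 * hell_int p r =
  \int[mu]_x (8^-1 * (Num.sqrt (p x) - Num.sqrt (q x))^+2
               - 2 * (Num.sqrt (r x) - Num.sqrt (p x))^+2
               + 2^-1 * (p x - q x)).
  rewrite RintegralD //; last exact: integrableB_EFin.
  rewrite RintegralB // !RintegralZl //; last exact: integrableB_EFin.
  rewrite RintegralB // (density_Rintegral dp) (density_Rintegral dq) subrr.
  by rewrite mulr0 addr0 (hell_int_sym mu p r) mulrC.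
apply: le_Rintegral => //.
- exact/integrableD_EFin/i3/integrableB_EFin.
- apply: (integrable_weighted dr measurable_test_summand test_summand_bounded_dens
    id 1) => // y; by rewrite ler_norml.
move=> x _; have p0 := density_ge0 dp x; have q0 := density_ge0 dq x.
have := ratio_lower_bound _ _ _ (sqrtr_ge0 (p x)) (sqrtr_ge0 (q x)) (sqrtr_ge0 (r x)).
rewrite !sqr_sqrtr ?(density_ge0 dr) // -test_summandE.
by move: (test_summand p q x) (Num.sqrt (p x)) (Num.sqrt (q x)) (Num.sqrt (r x)) => ????; lra.
Qed.

Lemma second_moment_bound :
  \int[mu]_x (r x * test_summand p q x ^+ 2) <= 2 * hell_int p r + 4 * hell_int p q.
Proof.
have iA := integrable_sqrt_gap mu dp dq; have iB := integrable_sqrt_gap mu dr dp.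
have i1 := integrableZl_EFin 2 iB; have i2 := integrableZl_EFin 4 iA.
have -> : 2 * hell_int p r + 4 * hell_int p q =
  \int[mu]_x (2 * (Num.sqrt (r x) - Num.sqrt (p x))^+2
               + 4 * (Num.sqrt (p x) - Num.sqrt (q x))^+2).
  by rewrite RintegralD // !RintegralZl // (hell_int_sym mu p r).
apply: le_Rintegral => //; last first.
- move=> x _; have p0 := density_ge0 dp x; have q0 := density_ge0 dq x.
  have := ratio_sq_upper_bound _ _ _ (sqrtr_ge0 (p x)) (sqrtr_ge0 (q x)) (sqrtr_ge0 (r x)).
  by rewrite !sqr_sqrtr ?(density_ge0 dr) // -test_summandE.
- exact: integrableD_EFin.
apply: (integrable_weighted dr measurable_test_summand test_summand_bounded_dens
  (fun y => y ^+ 2) 1); first exact: measurable_funX.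
by move=> y /andP[y1 y2]; rewrite ger0_norm ?sqr_ge0 //; nra.
Qed.

End test_moments.
Arguments measurable_test_summand {R d T mu p q}.
Arguments test_summand_bounded_dens {R d T mu p q}.
Arguments mean_lower_bound {R d T mu p q r}.
Arguments second_moment_bound {R d T mu p q r}.

(* gam = 1/8 - 2 beta^2 lower-bounds the drift E_R f / I(P, Q); the sample
   size constant is C = 20 / gam^2. *)
Definition drift {R : realType} (beta : R) : R := 8^-1 - 2 * beta^+2.
Definition sample_constant {R : realType} (beta : R) : R := 20 / drift beta ^+ 2.

Lemma exponent_bound {R : realType} (beta I J m v : R) :
  0 <= beta -> beta < 4^-1 -> 0 <= I -> J <= beta^+2 * I ->
  I / 8 - 2 * J <= m -> v <= 2 * J + 4 * I ->
  - (drift beta / 20 * m) + 2 * (drift beta / 20)^+2 * v <= - (drift beta ^+ 2 * I / 40).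
Proof.
rewrite /drift; set g := 8^-1 - 2 * beta^+2 => b0 b4 I0 hJ hm hv.
have b2 : beta^+2 < 16^-1 by nra.
have g0 : 0 <= g by rewrite /g; lra.
have mg : g * I <= m by rewrite /g; nra.
have v5 : v <= 5 * I by nra.
have t1 : g / 20 * (g * I) <= g / 20 * m by rewrite ler_wpM2l ?divr_ge0.
have t2 : (g / 20)^+2 * v <= (g / 20)^+2 * (5 * I) by rewrite ler_wpM2l ?sqr_ge0.
have e : - (g / 20 * (g * I)) + 2 * ((g / 20)^+2 * (5 * I)) = - (g^+2 * I / 40) by field.
clearbody g; lra.
Qed.

Lemma hellinger_test_H0 {R : realType} {d : measure_display} {T : measurableType d}
  {mu : {measure set T -> \bar R}} {p q r : T -> R} {beta delta : R} {n : nat} :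
  is_density mu p -> is_density mu q -> is_density mu r ->
  0 <= beta -> beta < 4^-1 -> 0 < hell_int mu p q ->
  hell_int mu p r <= beta^+2 * hell_int mu p q -> 0 < delta < 1 ->
  sample_constant beta * ln delta^-1 / (hellinger mu p q)^+2 <= n%:R ->
  ((1 - delta)%:E <= iid_expect mu r n (fun xs => (out_H0 p q xs)%:E))%E.
Proof.
move=> dp dq dr b0 b4 I0 hI /andP[d0 d1] hn.
set I := hell_int mu p q; set g := drift beta; set lam := g / 20.
set M := mgf mu r (test_summand p q) lam.
have mf := measurable_test_summand dp dq; have fb := test_summand_bounded_dens dp dq.
have g0 : 0 < g by rewrite /g /drift; nra.
have l0 : 0 <= lam by rewrite /lam divr_ge0 // ltW.
have l2 : lam <= 2^-1 by rewrite /lam /g /drift; nra.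
have M_le : M <= expR (- (g^+2 * I / 40)).
  apply: le_trans (mgf_le_quadratic dr mf fb lam l0 l2) _.
  apply: le_trans (expR_ge1Dx _); rewrite -addrA lerD2l.
  exact: exponent_bound b0 b4 (ltW I0) hI (mean_lower_bound dp dq dr)
    (second_moment_bound dp dq dr).
have L_le : ln delta^-1 <= n%:R * (g^+2 * I / 40).
  move: hn; rewrite hellinger_sqr -/I /sample_constant -/g.
  rewrite ler_pdivrMr ?divr_gt0 // => hn.
  have : 20 / g^+2 * ln delta^-1 * g^+2 <= n%:R * (I / 2) * g^+2.
    by rewrite ler_wpM2r ?sqr_ge0.
  by rewrite mulrAC divfK ?sqrf_eq0 ?gt_eqF //; lra.
have M0 : 0 <= M.
  by apply: Rintegral_ge0 => x _; rewrite mulr_ge0 ?expR_ge0 ?(density_ge0 dr).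
have Mn : M ^+ n <= delta.
  apply: le_trans (lerXn2r n _ _ M_le) _; rewrite ?nnegrE ?expR_ge0 //.
  rewrite -expRM_natl -[delta]invrK -[delta^-1]lnK ?posrE ?invr_gt0 //.
  by rewrite -expRN ler_expR; lra.
have := chernoff dr mf fb n 0 lam l0; rewrite mulr0 oppr0 expR0 mul1r -/M.
rewrite (_ : accept_prob _ _ _ _ _ = iid_expect mu r n (fun xs => (out_H0 p q xs)%:E)).
  by apply: le_trans; rewrite lee_fin; lra.
by congr iid_expect; apply: funext => xs; rewrite add0r out_H0_sum.
Qed.

Lemma distr_neq_sym {R : realType} {d : measure_display} {T : measurableType d}
  {mu : {measure set T -> \bar R}} {p q : T -> R} :
  distr_neq mu p q -> distr_neq mu q p.
Proof. by case=> A [mA neqA]; exists A; split => // eqA; apply: neqA. Qed.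

Theorem corollary2 (R : realType) (beta : R) :
  0 <= beta -> beta < (Num.sqrt 2 - 1) / (2 * Num.sqrt 2 - 1) ->
  exists C : R,
  forall (d : measure_display) (T : measurableType d)
         (mu : {measure set T -> \bar R}),
  sigma_finite setT mu ->
  forall P Q : T -> R, is_density mu P -> is_density mu Q -> distr_neq mu P Q ->
  forall delta : R, 0 < delta < 1 ->
  forall n : nat, C * ln delta^-1 / (hellinger mu P Q) ^+ 2 <= n%:R ->
  forall Rd : T -> R, is_density mu Rd ->
    (close_to mu beta (hellinger mu P Q) P Rd ->
       ((1 - delta)%:E <= iid_expect mu Rd n (fun xs => (out_H0 P Q xs)%:E))%E) /\
    (close_to mu beta (hellinger mu P Q) Q Rd ->
       ((1 - delta)%:E <= iid_expect mu Rd n (fun xs => (out_H1 P Q xs)%:E))%E).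
Proof.
move=> b0 /beta_lt_quarter b4; exists (sample_constant beta).
move=> d T mu _ P Q dP dQ neqPQ delta hdelta n hn Rd dR; split => close.
  apply: (hellinger_test_H0 dP dQ dR b0 b4 (hell_int_gt0 mu dP dQ neqPQ) _ hdelta hn).
  exact: close_hell_int mu beta P Q Rd b0 dP dR close.
(* exchanging P and Q turns H1 into H0 and leaves H(P, Q) unchanged *)
under eq_fun do rewrite out_H1_swap.
rewrite hellinger_sym in close hn.
have neqQP := distr_neq_sym neqPQ.
apply: (hellinger_test_H0 dQ dP dR b0 b4 (hell_int_gt0 mu dQ dP neqQP) _ hdelta hn).
exact: close_hell_int mu beta Q P Rd b0 dQ dR close.
Qed.
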